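(* Let $q$ be a prime power and $N\ge n\ge1$. Then $\chi_1(N\times n,q)=q^N$.
   Context: $\mathbb{F}_q^{N\times n}$ is the set of $N\times n$ matrices over $\mathbb{F}_q$. An exactly $d$-distance coloring is a map $\Gamma:\mathbb{F}_q^{N\times n}\to\{1,\dots,L\}$ such that $\Gamma(M_1)\ne\Gamma(M_2)$ whenever $\mathrm{Rk}(M_1-M_2)=d$. $\chi_d(N\times n,q)$ denotes the minimum number $L$ of colors in an exactly $d$-distance coloring. *)

From HB Require Import structures.
From mathcomp Require Import all_boot all_order all_algebra all_field.
Set Implicit Arguments. Unset Strict Implicit. Unset Printing Implicit Defensive.
Import GRing.Theory.
Local Open Scope ring_scope.

(* An exactly d-distance coloring of F^{N x n} with L colors (colors are
   'I_L, i.e. {0,..,L-1}, in bijection with {1,..,L}): a map Gamma such that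
   Gamma M1 <> Gamma M2 whenever rank (M1 - M2) = d. *)
Definition exact_dist_coloring (F : finFieldType) (N n d L : nat)
  (Gamma : 'M[F]_(N, n) -> 'I_L) : bool :=
  [forall M1 : 'M[F]_(N, n), forall M2 : 'M[F]_(N, n),
     (\rank (M1 - M2)%R == d)%N ==> (Gamma M1 != Gamma M2)].

Definition has_exact_dist_coloring (F : finFieldType) (N n d : nat) : pred nat :=
  fun L => [exists Gamma : {ffun 'M[F]_(N, n) -> 'I_L},
              @exact_dist_coloring F N n d L Gamma].

Lemma has_exact_dist_coloring_ex (F : finFieldType) (N n d : nat) :
  (0 < d)%N -> exists L, has_exact_dist_coloring F N n d L.
Proof.
move=> d_gt0; exists #|{: 'M[F]_(N, n)}|; apply/existsP.
exists [ffun M => enum_rank M]; apply/forallP => M1; apply/forallP => M2.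
apply/implyP => /eqP Hr; rewrite !ffunE; apply/negP => /eqP /enum_rank_inj E.
by move: Hr d_gt0; rewrite E subrr mxrank0 => <-.
Qed.

(* Defined for d >= 1 (for d = 0 no coloring exists, since rank (M - M) = 0). *)
Definition chi (F : finFieldType) (N n d : nat) (d_gt0 : (0 < d)%N) : nat :=
  ex_minn (has_exact_dist_coloring_ex F N n d_gt0).

(* Lower bound: the matrices whose only nonzero column is the first one form
   a set of q^N matrices any two of which are at rank distance 1, so they all
   get different colors.  Upper bound: identify F^N with a degree-N extension
   K of F (the splitting field of X^(q^N) - X) and color M by
   sum_i b_i * (row i of M, read in K), b a basis of K.  A rank-one difference
   c r factors as (sum_i c_i b_i) * (r read in K), a product of two nonzero
   field elements, so the colors differ. *)

From HB Require Import structures.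
From mathcomp Require Import all_boot all_order all_algebra all_field.

Set Implicit Arguments.
Unset Strict Implicit.
Unset Printing Implicit Defensive.

Import GRing.Theory.
Local Open Scope ring_scope.

Lemma natr_card_finField (F : finFieldType) : (#|F|%:R : F) = 0.
Proof.
have [p _ pcharFp] := finPcharP F.
rewrite (card_pprimeChar pcharFp) natrX (pcharf0 pcharFp) expr0n.
case: (logn _ _) (card_pprimeChar pcharFp) => //= E.
by move: (finNzRing_gt1 F); rewrite E.
Qed.

Lemma size_XnsubX (R : nzRingType) m : (1 < m)%N ->
  size ('X^m - 'X : {poly R}) = m.+1.
Proof. by move=> m_gt1; rewrite size_polyDl size_polyXn // size_polyN size_polyX. Qed.

Lemma separable_XnsubX (R : fieldType) m : m%:R = 0 :> R ->
  separable_poly ('X^m - 'X : {poly R}).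
Proof.
move=> m0; rewrite unlock derivB derivXn derivX -scaler_nat m0 scale0r sub0r.
by rewrite -[X in coprimep _ X]scaleN1r coprimepZr ?coprimep1 // oppr_eq0 oner_eq0.
Qed.

Lemma dim_splittingField_XnsubX (F : finFieldType) (L : splittingFieldType F) k :
  (0 < k)%N ->
  splittingFieldFor 1 (map_poly (in_alg L) ('X^(#|F| ^ k) - 'X)) {:L} ->
  \dim {:L} = k.
Proof.
move=> k_gt0; set m := (#|F| ^ k)%N.
have F_gt1 := finNzRing_gt1 F.
have m_gt1 : (1 < m)%N by rewrite -(exp1n k) ltn_exp2r.
rewrite rmorphB rmorphXn /= map_polyX => -[zs Dp defL].
pose FL := FinFieldExtType L.
have /finField_galois_generator[/= a _ Da]: (1 <= {:L})%VS by apply: sub1v.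
rewrite dimv1 expn1 in Da.
have Dak x : (a ^+ k)%g x = x ^+ m.
  rewrite /m; elim: (k) => [|i IHi]; first by rewrite gal_id.
  by rewrite expgSr expnSr exprM galM ?memvf // IHi Da ?memvf.
have zsE : zs =i fixedSpace (a ^+ k)%g.
  move=> z; rewrite -root_prod_XsubC -(eqp_root Dp) (sameP fixedSpaceP eqP).
  by rewrite /root !hornerE subr_eq0 Dak.
have zsT : FL =i zs.
  suffices fixT : fixedSpace (a ^+ k)%g = {:L}%VS.
    by move=> z; rewrite zsE fixT memvf.
  set E := fixedSpace _ in zsE *.
  apply/eqP; rewrite eqEsubv subvf -defL -[E]subfield_closed agenvS //.
  by rewrite subv_add sub1v; apply/span_subvP => y; rewrite zsE.
have Uzs : uniq zs.
  rewrite -separable_prod_XsubC -(eqp_separable Dp) separable_XnsubX //.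
  rewrite -(rmorph_nat (in_alg L)) /m natrX natr_card_finField.
  by rewrite expr0n gtn_eqF // rmorph0.
have cardL : #|FL| = m.
  rewrite (eq_card zsT); apply: succn_inj; rewrite (card_uniqP _) //=.
  by rewrite -(size_prod_XsubC _ id) -(eqp_size Dp) size_XnsubX.
apply/eqP; rewrite -(eqn_exp2l _ _ F_gt1) -/m -cardL.
by rewrite -(card_vspace (fullv : {vspace finvect_type L})) card_vspacef.
Qed.

Lemma finField_ext_exists (F : finFieldType) k : (0 < k)%N ->
  exists L : splittingFieldType F, \dim {:L} = k.
Proof.
move=> k_gt0; have m_gt1 : (1 < #|F| ^ k)%N.
  by rewrite -(exp1n k) ltn_exp2r ?finNzRing_gt1.
have /FinSplittingFieldFor[L splitL] : 'X^(#|F| ^ k) - 'X != 0 :> {poly F}.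
  by rewrite -size_poly_eq0 size_XnsubX.
by exists L; apply: dim_splittingField_XnsubX.
Qed.

Lemma mxrank_eq1_factor (F : fieldType) m n (A : 'M[F]_(m, n)) :
  \rank A = 1%N -> exists (c : 'cV_m) (r : 'rV_n), A = c *m r.
Proof.
move=> rA1; move: (col_base A) (row_base A) (mulmx_base A); rewrite rA1.
by move=> c r <-; exists c, r.
Qed.

Lemma has_exact_dist_coloring_map (F : finFieldType) N n d (T : finType)
    (f : 'M[F]_(N, n) -> T) :
  (forall M1 M2, \rank (M1 - M2) = d -> f M1 != f M2) ->
  has_exact_dist_coloring F N n d #|T|.
Proof.
move=> f_sep; apply/existsP; exists [ffun M => enum_rank (f M)].
apply/forallP => M1; apply/forallP => M2; apply/implyP => /eqP rM.
by rewrite !ffunE (inj_eq enum_rank_inj) f_sep.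
Qed.

Lemma card_clique_le_colors (F : finFieldType) N n d (T : finType)
    (g : T -> 'M[F]_(N, n)) L :
  (forall x y, x != y -> \rank (g x - g y) = d) ->
  has_exact_dist_coloring F N n d L -> (#|T| <= L)%N.
Proof.
move=> g_clique /existsP[Gamma /forallP colG].
suff Gg_inj : injective (Gamma \o g) by rewrite -[L]card_ord (leq_card _ Gg_inj).
move=> x y /= Gxy; apply/eqP; apply: contraT => xy.
have /forallP/(_ (g y))/implyP := colG (g x).
by rewrite g_clique // eqxx Gxy eqxx => /(_ isT).
Qed.

Section ProductColoring.
Import passmx.

Variables (F : finFieldType) (L : fieldExtType F) (n : nat).
Hypothesis n_le_dim : (n <= \dim {:L})%N.

Local Notation e := (vbasis {:L}).
Local Notation vecof := (vecof e).

Let embed (r : 'rV[F]_n) : L := vecof (r *m pid_mx n).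

Let embed_eq0 r : (embed r == 0) = (r == 0).
Proof.
rewrite vecof_eq0 ?vbasisP // mulmx_free_eq0 //.
by rewrite /row_free rank_pid_mx.
Qed.

Let product (M : 'M[F]_(\dim {:L}, n)) : L :=
  \sum_(i < \dim {:L}) e`_i * embed (row i M).

Let productB M1 M2 : product (M1 - M2) = product M1 - product M2.
Proof.
rewrite /product -sumrB; apply: eq_bigr => i _.
by rewrite /embed -mulrBr !linearB /= mulmxBl linearB.
Qed.

Let product_colrow c r : product (c *m r) = vecof c^T * embed r.
Proof.
rewrite /product /vecof mulr_suml; apply: eq_bigr => i _.
have -> : row i (c *m r) = c i 0 *: r by apply/rowP => j; rewrite !mxE big_ord1.
by rewrite /embed -scalemxAl linearZ /= mxE -scalerAl scalerAr.
Qed.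

Lemma has_exact_dist_coloring_product :
  has_exact_dist_coloring F (\dim {:L}) n 1 (#|F| ^ \dim {:L})%N.
Proof.
rewrite -(card_vspace (fullv : {vspace finvect_type L})) card_vspacef.
apply: (@has_exact_dist_coloring_map _ _ _ _ (finvect_type L) product) => M1 M2 rM.
have [c [r DM]] := mxrank_eq1_factor rM.
have [c_neq0 r_neq0] : c != 0 /\ r != 0.
  by split; apply/eqP => x0; move: rM; rewrite DM x0 (mul0mx, mulmx0) mxrank0.
rewrite -subr_eq0 -productB DM product_colrow mulf_eq0 negb_or embed_eq0 r_neq0.
by rewrite vecof_eq0 ?vbasisP // trmx_eq0 c_neq0.
Qed.

End ProductColoring.

Lemma card_cV_le_dist1_colors (F : finFieldType) N n L : (0 < n)%N ->
  has_exact_dist_coloring F N n 1 L -> (#|F| ^ N <= L)%N.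
Proof.
move=> n_gt0; pose g (v : 'cV[F]_N) : 'M_(N, n) := v *m delta_mx 0 (Ordinal n_gt0).
have -> : (#|F| ^ N)%N = #|{: 'cV[F]_N}| by rewrite card_mx muln1.
apply: (@card_clique_le_colors F N n 1 _ g) => v w vw.
rewrite /g -mulmxBl mxrankMfree; last by rewrite /row_free mxrank_delta.
by rewrite -mxrank_tr rank_rV trmx_eq0 subr_eq0 vw.
Qed.

Theorem proposition4p1 (F : finFieldType) (N n : nat) :
  (1 <= n)%N -> (n <= N)%N -> @chi F N n 1 isT = (#|F| ^ N)%N.
Proof.
move=> n_gt0 n_le_N; rewrite /chi; case: ex_minnP => L colL minL.
apply/eqP; rewrite eqn_leq (card_cV_le_dist1_colors n_gt0 colL) andbT.
apply: minL; have [K dimK] := finField_ext_exists F (leq_trans n_gt0 n_le_N).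
rewrite -dimK in n_le_N *; exact: has_exact_dist_coloring_product.
Qed.
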